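(* Let $\mathcal{A}=\{1,\dots,K\}$, let $a^*\in\mathcal{A}$, $T\ge1$, $\sigma>0$, and for each $a\in\mathcal{A}$ let $m_a\ge1$ be an integer and $\vec{y}_a\in\mathbb{R}^{m_a}$. For perturbations $\vec{\epsilon}_a\in\mathbb{R}^{m_a}$ put $\tilde{\mu}_a=(\vec{y}_a+\vec{\epsilon}_a)^T\mathbf{1}/m_a$ and $$u_a(T+1)=\tilde{\mu}_a+3\sigma\sqrt{\frac{\log(T+1)}{m_a}}.$$ Fix a margin $\xi>0$ and consider $$P_2:\quad \min_{\{\vec{\epsilon}_a\}_{a\in\mathcal{A}}}\ \sum_{a\in\mathcal{A}}\|\vec{\epsilon}_a\|_2^2\quad\text{s.t.}\quad u_{a^*}(T+1)\geq u_a(T+1)+\xi\ \ \forall a\neq a^*.$$ Then $P_2$ is a quadratic program with linear constraints and, for every reward instance $\{\vec{y}_a\}_{a\in\mathcal{A}}$, it has at least one optimal solution. In particular, after poisoning with such a solution, the UCB algorithm pulls $a^*$ at round $T+1$.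
   Context: Offline attack setting: a bandit algorithm pulls arms $a_1,\dots,a_T$, receiving rewards $r_t=\mu_{a_t}+\eta_t$ with zero-mean $\sigma$-subGaussian noise; $m_a$ is the number of rounds $t\le T$ with $a_t=a$, $\vec{y}_a=(r_t:a_t=a)^T$, and an attacker replaces arm $a$'s rewards by $\vec{y}_a+\vec{\epsilon}_a$ before the algorithm updates. $\mathbf{1}$ is the all-ones vector. The UCB algorithm at round $t$ pulls $\arg\max_a \tilde{\mu}_a(t-1)+3\sigma\sqrt{\log t/N_a(t-1)}$, where $\tilde{\mu}_a(t-1)$ is the (poisoned) empirical mean and $N_a(t-1)$ the number of pulls of arm $a$ up to round $t-1$. *)

From HB Require Import structures.
From mathcomp Require Import all_boot all_order all_algebra.
From mathcomp Require Import all_classical all_reals all_analysis.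
Set Implicit Arguments. Unset Strict Implicit. Unset Printing Implicit Defensive.
Import Order.TTheory GRing.Theory Num.Theory.
Local Open Scope ring_scope.

Definition poisoned_mean (R : realType) (K : nat) (m : 'I_K -> nat)
  (y eps : forall a : 'I_K, 'I_(m a) -> R) (a : 'I_K) : R :=
  (\sum_(i < m a) (y a i + eps a i)) / (m a)%:R.

Definition ucb_index (R : realType) (K : nat) (m : 'I_K -> nat)
  (sigma : R) (T : nat) (y eps : forall a : 'I_K, 'I_(m a) -> R)
  (a : 'I_K) : R :=
  poisoned_mean y eps a
  + 3 * sigma * Num.sqrt (ln (T.+1)%:R / (m a)%:R).

Definition attack_cost (R : realType) (K : nat) (m : 'I_K -> nat)
  (eps : forall a : 'I_K, 'I_(m a) -> R) : R :=
  \sum_(a < K) \sum_(i < m a) (eps a i) ^+ 2.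

Definition P2_feasible (R : realType) (K : nat) (m : 'I_K -> nat)
  (sigma xi : R) (T : nat) (astar : 'I_K)
  (y eps : forall a : 'I_K, 'I_(m a) -> R) : Prop :=
  forall a : 'I_K, a != astar ->
    ucb_index sigma T y eps a + xi <= ucb_index sigma T y eps astar.

Definition P2_optimal (R : realType) (K : nat) (m : 'I_K -> nat)
  (sigma xi : R) (T : nat) (astar : 'I_K)
  (y eps : forall a : 'I_K, 'I_(m a) -> R) : Prop :=
  P2_feasible sigma xi T astar y eps /\
  forall eps' : forall a : 'I_K, 'I_(m a) -> R,
    P2_feasible sigma xi T astar y eps' ->
    attack_cost eps <= attack_cost eps'.

(* UCB at round T+1 (after poisoning with eps) pulls astar: astar is the
   unique maximizer of the UCB index, so the argmax is astar regardless of
   tie-breaking. *)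
Definition ucb_pulls (R : realType) (K : nat) (m : 'I_K -> nat)
  (sigma : R) (T : nat) (y eps : forall a : 'I_K, 'I_(m a) -> R)
  (astar : 'I_K) : Prop :=
  forall a : 'I_K, a != astar ->
    ucb_index sigma T y eps a < ucb_index sigma T y eps astar.

From HB Require Import structures.
From mathcomp Require Import all_boot all_order all_algebra.
From mathcomp Require Import all_classical all_reals all_analysis.
From mathcomp Require Import ring lra.
Import Order.TTheory GRing.Theory Num.Theory.
Import numFieldNormedType.Exports.
Local Open Scope ring_scope.

(* The constraints of P2 see each perturbation eps_a only through its mean
   x_a, and by Cauchy-Schwarz ||eps_a||^2 >= m_a x_a^2, with equality for
   constant vectors.  Once the mean t of eps_{a*} is fixed, the cheapest
   admissible means are x_a = min(0, t + s_a), where s_a is the slack of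
   constraint a without poisoning.  So P2 reduces to minimising the
   continuous function t |-> m_{a*} t^2 + sum_{a <> a*} m_a min(0, t + s_a)^2,
   which dominates m_{a*} t^2 and hence attains its minimum on a compact
   interval.  The margin xi > 0 then makes a* the strict UCB maximiser. *)

Lemma sqr_min0_le (R : realDomainType) (u v : R) :
  u <= v -> Num.min 0 v ^+ 2 <= u ^+ 2.
Proof.
move=> le_uv; have [v_ge0|v_lt0] := leP 0 v.
  by rewrite expr0n sqr_ge0.
nra.
Qed.

Lemma sqr_mean_le_sum_sqr (R : realFieldType) n (e : 'I_n -> R) :
  (0 < n)%N -> n%:R * ((\sum_i e i) / n%:R) ^+ 2 <= \sum_i e i ^+ 2.
Proof.
move=> n_gt0; set S := \sum_i e i; set x := S / n%:R.
have S_nx : S = n%:R * x by rewrite /x mulrC divfK // pnatr_eq0 -lt0n.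
have : 0 <= \sum_i (e i - x) ^+ 2 by apply: sumr_ge0 => i _; exact: sqr_ge0.
under eq_bigr do rewrite sqrrB -mulr_natr mulrAC.
rewrite big_split sumrB /= sumr_const card_ord -!mulr_suml -/S S_nx.
by move=> h; nra.
Qed.

Lemma continuous_has_min_of_sqr_le (R : realType) (f : R -> R) (c : R) :
  continuous f -> 0 < c -> (forall t, c * t ^+ 2 <= f t) ->
  exists t0, forall t, f t0 <= f t.
Proof.
move=> f_cont c_gt0 f_ge.
pose M := `|f 0| / c + 1.
have f0_lt : f 0 < c * M.
  rewrite /M mulrDr mulr1 mulrC divfK ?gt_eqF //.
  by rewrite (le_lt_trans (ler_norm _)) // ltrDl.
have M_ge1 : 1 <= M by rewrite /M lerDr divr_ge0 // ltW.
have [|t0 _ t0_min] := @EVT_min R f (- M) M _ (continuous_subspaceT f_cont).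
  lra.
exists t0 => t.
have [t_in|t_out] := boolP (t \in `[- M, M]); first exact: t0_min.
have f0_ge : f t0 <= f 0 by apply: t0_min; rewrite in_itv /=; lra.
have M_lt : c * M < c * t ^+ 2.
  rewrite ltr_pM2l //; move: t_out; rewrite in_itv /= negb_and -!ltNge.
  by case/orP => ?; nra.
by have := f_ge t; lra.
Qed.

Lemma P2_feasible_ucb_pulls (R : realType) (K : nat) (m : 'I_K -> nat)
    (sigma xi : R) (T : nat) (astar : 'I_K)
    (y eps : forall a : 'I_K, 'I_(m a) -> R) :
  0 < xi -> P2_feasible sigma xi T astar y eps -> ucb_pulls sigma T y eps astar.
Proof. by move=> xi_gt0 feas a a_neq; have := feas a a_neq; lra. Qed.

Section P2_solution.

Variables (R : realType) (K : nat) (m : 'I_K -> nat).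
Variables (sigma xi : R) (T : nat) (astar : 'I_K).
Variable y : forall a : 'I_K, 'I_(m a) -> R.
Hypothesis m_gt0 : forall a, (0 < m a)%N.

Local Notation perturbation := (forall a : 'I_K, 'I_(m a) -> R).
Local Notation feasible := (P2_feasible sigma xi T astar y).
Local Notation index := (ucb_index sigma T y).

Definition pert_mean (eps : perturbation) a := (\sum_i eps a i) / (m a)%:R.

Definition no_pert : perturbation := fun _ _ => 0.

Definition ucb_slack a := index no_pert astar - index no_pert a - xi.

Lemma natr_m_gt0 a : 0 < (m a)%:R :> R.
Proof. by rewrite ltr0n. Qed.

Lemma ucb_index_pert eps a : index eps a = index no_pert a + pert_mean eps a.
Proof.
rewrite /ucb_index /poisoned_mean /pert_mean /no_pert !big_split /=.
by rewrite big1_eq addr0 mulrDl; lra.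
Qed.

Lemma P2_feasibleE eps : feasible eps <->
  forall a, a != astar -> pert_mean eps a <= pert_mean eps astar + ucb_slack a.
Proof.
split=> feas a a_neq; have := feas a a_neq;
  rewrite /ucb_slack !(ucb_index_pert eps); lra.
Qed.

Definition best_mean (t : R) a :=
  if a == astar then t else Num.min 0 (t + ucb_slack a).

Definition best_pert (t : R) : perturbation := fun a _ => best_mean t a.

Lemma pert_mean_best t a : pert_mean (best_pert t) a = best_mean t a.
Proof.
rewrite /pert_mean sumr_const card_ord -(mulr_natr (best_mean t a)).
by rewrite mulfK ?gt_eqF ?natr_m_gt0.
Qed.

Lemma attack_cost_best t :
  attack_cost (best_pert t) = \sum_a (m a)%:R * best_mean t a ^+ 2.
Proof.
by apply: eq_bigr => a _; rewrite /best_pert sumr_const card_ord mulr_natl.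
Qed.

Lemma best_pert_feasible t : feasible (best_pert t).
Proof.
apply/P2_feasibleE => a a_neq; rewrite !pert_mean_best /best_mean eqxx.
by rewrite (negbTE a_neq) ge_min lexx orbT.
Qed.

Lemma attack_cost_ge_means eps :
  \sum_a (m a)%:R * pert_mean eps a ^+ 2 <= attack_cost eps.
Proof. by apply: ler_sum => a _; exact: sqr_mean_le_sum_sqr. Qed.

Lemma attack_cost_best_le eps :
  feasible eps -> attack_cost (best_pert (pert_mean eps astar)) <= attack_cost eps.
Proof.
move/P2_feasibleE=> feas; rewrite attack_cost_best.
apply: le_trans (attack_cost_ge_means eps); apply: ler_sum => a _.
rewrite /best_mean; case: eqP => [->|/eqP a_neq] //.
by rewrite ler_pM2l ?natr_m_gt0 //; apply: sqr_min0_le; exact: feas.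
Qed.

Lemma attack_cost_best_ge t :
  (m astar)%:R * t ^+ 2 <= attack_cost (best_pert t).
Proof.
rewrite attack_cost_best (bigD1 astar) //= /best_mean eqxx lerDl.
by apply: sumr_ge0 => a _; rewrite mulr_ge0 ?sqr_ge0.
Qed.

Lemma continuous_best_mean a : continuous (best_mean ^~ a).
Proof.
rewrite /best_mean; case: eqP => _ t; first exact: cvg_id.
apply: (@continuous_min _ _ (fun=> 0) (+%R^~ (ucb_slack a))); first exact: cvg_cst.
by apply: cvgD; [exact: cvg_id | exact: cvg_cst].
Qed.

Lemma continuous_attack_cost_best : continuous (fun t => attack_cost (best_pert t)).
Proof.
under eq_fun do rewrite attack_cost_best.
apply: continuous_big => [|a _ t]; first exact: add_continuous.
apply: (@continuousM _ R (fun=> (m a)%:R) (fun x => best_mean x a ^+ 2) t (cvg_cst _)).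
exact: (@continuousM _ R _ _ t (continuous_best_mean a t) (continuous_best_mean a t)).
Qed.

Lemma P2_optimal_exists : exists eps, P2_optimal sigma xi T astar y eps.
Proof.
have [t0 t0_min] := @continuous_has_min_of_sqr_le R _ _ continuous_attack_cost_best
  (natr_m_gt0 astar) attack_cost_best_ge.
exists (best_pert t0); split=> [|eps feas]; first exact: best_pert_feasible.
exact: le_trans (t0_min _) (attack_cost_best_le _ feas).
Qed.

End P2_solution.

Theorem theorem2 (R : realType) (K : nat) (astar : 'I_K) (T : nat)
  (sigma xi : R) (m : 'I_K -> nat)
  (y : forall a : 'I_K, 'I_(m a) -> R) :
  (1 <= T)%N -> 0 < sigma -> 0 < xi -> (forall a, (0 < m a)%N) ->
  exists eps : forall a : 'I_K, 'I_(m a) -> R,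
    P2_optimal sigma xi T astar y eps /\ ucb_pulls sigma T y eps astar.
Proof.
move=> _ _ xi_gt0 m_gt0.
have [eps [feas opt]] := P2_optimal_exists _ _ _ sigma xi T astar y m_gt0.
exists eps; split; first by split.
exact: P2_feasible_ucb_pulls xi_gt0 feas.
Qed.
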